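(* Let $p,q\ge 3$ be relatively prime odd integers with $q\equiv\pm1\pmod p$. Then $$\sum_{\substack{n=1\\ p\nmid n,\ q\nmid n}}^{pq-1}\frac{\cot(\pi n/p)\cot(\pi n/q)}{\cos^2(\pi n/(pq))}=\begin{cases}\dfrac{2}{p}(p^2-1)(q-1), & q\equiv 1\pmod p,\\[2mm] \dfrac{2}{p}(p^2-1)(q+1), & q\equiv -1\pmod p.\end{cases}$$ *)

From Stdlib Require Import Reals Lra Lia Arith List Bool.
Open Scope R_scope.
Definition cot (x : R) : R := cos x / sin x.

Definition term (p q n : nat) : R :=
  cot (PI * INR n / INR p) * cot (PI * INR n / INR q)
  / (cos (PI * INR n / INR (p * q)))^2.

Definition S (p q : nat) : R :=
  fold_right Rplus 0
    (map (term p q)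
       (filter (fun n => andb (negb (Nat.eqb (n mod p) 0)) (negb (Nat.eqb (n mod q) 0)))
          (seq 1 (p * q - 1)))).

(* Write N = pq. For p not dividing n,
     cot (PI n / p) = -(2/p) sum_{0<i<p} i sin (2 PI i n / p),
   and the right-hand side vanishes when p | n; for odd N,
     1 / cos (PI n / N)^2 = sum_{0<=l<N} (-1)^l (N - 2l) cos (2 PI l n / N).
   Substituting both and summing over all n mod N first, orthogonality of the
   cosines cos (2 PI d n / N) leaves
     S = 2 sum_{0<i<p, 0<k<q} i (2k - q) (-1)^(i+k) (pq - 2 |iq - kp|).
   For fixed i the k-sum splits at k = floor (iq/p) into two alternating sums of
   quadratics, which telescope.  When q = mp +- 1 (m is even, as p and q are odd)
   row i contributes (-1)^i 4 m i^2 (p - i), and the alternating sum of these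
   over 0 < i < p is m (p^2 - 1). *)

From Stdlib Require Import Reals Lra Lia Arith List ZArith.
Open Scope R_scope.

Local Notation "n .+1" := (Datatypes.S n) (at level 2, left associativity, format "n .+1").

Fixpoint rsum (n : nat) (f : nat -> R) : R :=
  match n with O => 0 | n'.+1 => rsum n' f + f n' end.

Lemma rsum_ext n f g : (forall i, (i < n)%nat -> f i = g i) -> rsum n f = rsum n g.
Proof.
  induction n as [|n IH]; intros H; simpl; auto.
  rewrite IH by (intros; apply H; lia). rewrite H by lia. reflexivity.
Qed.

Lemma rsum_const n c : rsum n (fun _ => c) = INR n * c.
Proof. induction n as [|n IH]; simpl rsum; [simpl; ring|]. rewrite IH, S_INR. ring. Qed.

Lemma rsum_add n f g : rsum n (fun i => f i + g i) = rsum n f + rsum n g.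
Proof. induction n as [|n IH]; simpl; [lra|]. rewrite IH. lra. Qed.

Lemma rsum_sub n f g : rsum n (fun i => f i - g i) = rsum n f - rsum n g.
Proof. induction n as [|n IH]; simpl; [lra|]. rewrite IH. lra. Qed.

Lemma rsum_mull n c f : rsum n (fun i => c * f i) = c * rsum n f.
Proof. induction n as [|n IH]; simpl; [lra|]. rewrite IH. lra. Qed.

Lemma rsum_mulr n c f : rsum n (fun i => f i * c) = rsum n f * c.
Proof. induction n as [|n IH]; simpl; [lra|]. rewrite IH. lra. Qed.

Lemma rsum_comm n m f :
  rsum n (fun i => rsum m (fun j => f i j)) = rsum m (fun j => rsum n (fun i => f i j)).
Proof.
  induction n as [|n IH]; simpl.
  - rewrite rsum_const. ring.
  - rewrite IH, <- rsum_add. reflexivity.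
Qed.

Lemma rsum_succ_l n f : rsum n.+1 f = f O + rsum n (fun i => f i.+1).
Proof. induction n as [|n IH]; simpl in *; [lra|]. rewrite IH. lra. Qed.

Lemma rsum_split a b f : rsum (a + b) f = rsum a f + rsum b (fun i => f (a + i)%nat).
Proof.
  induction b as [|b IH]; simpl.
  - rewrite Nat.add_0_r. lra.
  - rewrite Nat.add_succ_r. simpl. rewrite IH. lra.
Qed.

Lemma rsum_rev n f : rsum n f = rsum n (fun i => f (n - 1 - i)%nat).
Proof.
  induction n as [|n IH]; auto.
  rewrite (rsum_succ_l n (fun i => f (n.+1 - 1 - i)%nat)).
  change (rsum n.+1 f) with (rsum n f + f n). rewrite IH.
  replace (n.+1 - 1 - 0)%nat with n by lia.
  rewrite (rsum_ext n (fun i => f (n - 1 - i)%nat) (fun i => f (n.+1 - 1 - i.+1)%nat)).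
  - lra.
  - intros; f_equal; lia.
Qed.

Lemma rsum_reflect q h : rsum (q - 1) (fun i => h i.+1) = rsum (q - 1) (fun i => h (q - i.+1)%nat).
Proof. rewrite rsum_rev. apply rsum_ext. intros i Hi. f_equal. lia. Qed.

Lemma rsum_indicator n w (b : nat -> bool) c l0 :
  (l0 < n)%nat -> b l0 = true -> (forall l, (l < n)%nat -> b l = true -> l = l0) ->
  rsum n (fun l => w l * (if b l then c else 0)) = w l0 * c.
Proof.
  induction n as [|n IH]; intros Hl Hb Hu; [lia|]. simpl.
  destruct (Nat.eq_dec l0 n) as [->|Hne].
  - rewrite Hb, (rsum_ext n _ (fun _ => 0)), rsum_const; [lra|].
    intros i Hi. destruct (b i) eqn:E; [apply Hu in E; lia | lra].
  - rewrite IH by (auto; lia). destruct (b n) eqn:E; [apply Hu in E; lia | lra].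
Qed.

Lemma pow_neg1_even m : Nat.Even m -> (-1) ^ m = 1.
Proof. intros [t ->]. rewrite pow_mult. replace ((-1) ^ 2) with 1 by (simpl; ring). apply pow1. Qed.

Lemma pow_neg1_odd m : Nat.Odd m -> (-1) ^ m = -1.
Proof. intros [t ->]. rewrite pow_add, pow_neg1_even by (exists t; lia). simpl. ring. Qed.

Lemma pow_neg1_sq k : (-1) ^ k * (-1) ^ k = 1.
Proof. rewrite <- pow_add. apply pow_neg1_even. exists k. lia. Qed.

Lemma pow_neg1_mul_odd p k : Nat.Odd p -> (-1) ^ (k * p) = (-1) ^ k.
Proof.
  intros [t ->]. replace (k * (2 * t + 1))%nat with (2 * (k * t) + k)%nat by lia.
  rewrite pow_add, pow_neg1_even by (exists (k * t)%nat; lia). ring.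
Qed.

(** * Telescoping trigonometric sums *)

Lemma sum_cos_even_mul z K :
  2 * sin z * rsum K (fun l => cos (2 * INR l * z)) = sin ((2 * INR K - 1) * z) + sin z.
Proof.
  induction K as [|K IH]; simpl rsum.
  - simpl. replace ((2 * 0 - 1) * z) with (- z) by ring. rewrite sin_neg. lra.
  - rewrite Rmult_plus_distr_l, IH, S_INR.
    replace ((2 * (INR K + 1) - 1) * z) with (2 * INR K * z + z) by ring.
    replace ((2 * INR K - 1) * z) with (2 * INR K * z - z) by ring.
    rewrite sin_plus, sin_minus. ring.
Qed.

Lemma sum_sin_odd_mul z K :
  2 * sin z * rsum K (fun l => sin ((2 * INR l + 1) * z)) = 1 - cos (2 * INR K * z).
Proof.
  induction K as [|K IH]; simpl rsum.
  - simpl. replace (2 * 0 * z) with 0 by ring. rewrite cos_0. lra.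
  - rewrite Rmult_plus_distr_l, IH, S_INR.
    replace (2 * (INR K + 1) * z) with ((2 * INR K + 1) * z + z) by ring.
    replace (2 * INR K * z) with ((2 * INR K + 1) * z - z) by ring.
    rewrite cos_plus, cos_minus. ring.
Qed.

Lemma sum_cos_odd_mul z K :
  2 * sin z * rsum K (fun l => cos ((2 * INR l + 1) * z)) = sin (2 * INR K * z).
Proof.
  induction K as [|K IH]; simpl rsum.
  - simpl. replace (2 * 0 * z) with 0 by ring. rewrite sin_0. lra.
  - rewrite Rmult_plus_distr_l, IH, S_INR.
    replace (2 * (INR K + 1) * z) with ((2 * INR K + 1) * z + z) by ring.
    replace (2 * INR K * z) with ((2 * INR K + 1) * z - z) by ring.
    rewrite sin_plus, sin_minus. ring.
Qed.

Lemma sum_lin_sin_even_mul z m :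
  2 * sin z * rsum m.+1 (fun j => INR j * sin (2 * INR j * z)) =
  rsum m (fun l => cos ((2 * INR l + 1) * z)) - INR m * cos ((2 * INR m + 1) * z).
Proof.
  induction m as [|m IH].
  - simpl. lra.
  - change (rsum m.+1.+1 (fun j => INR j * sin (2 * INR j * z))) with
      (rsum m.+1 (fun j => INR j * sin (2 * INR j * z)) + INR m.+1 * sin (2 * INR m.+1 * z)).
    rewrite Rmult_plus_distr_l, IH. simpl rsum. rewrite S_INR.
    replace ((2 * (INR m + 1) + 1) * z) with (2 * (INR m + 1) * z + z) by ring.
    replace ((2 * INR m + 1) * z) with (2 * (INR m + 1) * z - z) by ring.
    rewrite cos_plus, cos_minus. ring.
Qed.

Lemma sum_lin_cos_even_mul (N : R) z K :
  2 * sin z * rsum K.+1 (fun l => (N - 2 * INR l) * cos (2 * INR l * z)) =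
  N * sin z + (N - 2 * INR K) * sin ((2 * INR K + 1) * z)
  + 2 * rsum K (fun l => sin ((2 * INR l + 1) * z)).
Proof.
  induction K as [|K IH].
  - simpl. replace ((2 * 0 + 1) * z) with z by ring. replace (2 * 0 * z) with 0 by ring.
    rewrite cos_0. lra.
  - change (rsum K.+1.+1 (fun l => (N - 2 * INR l) * cos (2 * INR l * z))) with
      (rsum K.+1 (fun l => (N - 2 * INR l) * cos (2 * INR l * z))
       + (N - 2 * INR K.+1) * cos (2 * INR K.+1 * z)).
    rewrite Rmult_plus_distr_l, IH. simpl rsum. rewrite S_INR.
    replace ((2 * (INR K + 1) + 1) * z) with (2 * (INR K + 1) * z + z) by ring.
    replace ((2 * INR K + 1) * z) with (2 * (INR K + 1) * z - z) by ring.
    rewrite sin_plus, sin_minus. ring.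
Qed.

(** * Finite Fourier expansions of cot and sec^2 *)

Lemma sin_PI_frac_neq0 (M : Z) (N : nat) :
  (0 < N)%nat -> (M mod Z.of_nat N <> 0)%Z -> sin (PI * IZR M / INR N) <> 0.
Proof.
  intros HN HM Hs. apply sin_eq_0_0 in Hs as [k Hk].
  assert (HN' : INR N <> 0) by (apply not_0_INR; lia).
  assert (HMk : IZR M = IZR k * INR N).
  { apply Rmult_eq_reg_l with (PI / INR N).
    - replace (PI / INR N * IZR M) with (PI * IZR M / INR N) by (field; auto).
      rewrite Hk. field. auto.
    - apply Rmult_integral_contrapositive; split; [apply PI_neq0 | apply Rinv_neq_0_compat; auto]. }
  rewrite INR_IZR_INZ, <- mult_IZR in HMk. apply eq_IZR in HMk. subst M.
  apply HM, Z.mod_mul. lia.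
Qed.

Lemma cos_PI_frac_odd_neq0 N n : Nat.Odd N -> cos (PI * INR n / INR N) <> 0.
Proof.
  intros [t Ht]. assert (HN : INR N <> 0) by (apply not_0_INR; lia).
  intro Hc. apply cos_eq_0_0 in Hc as [k Hk].
  assert (Hnk : INR n * 2 = (2 * IZR k + 1) * INR N).
  { apply Rmult_eq_reg_l with (PI / INR N).
    - replace (PI / INR N * (INR n * 2)) with (2 * (PI * INR n / INR N)) by (field; auto).
      rewrite Hk. field. auto.
    - apply Rmult_integral_contrapositive; split; [apply PI_neq0 | apply Rinv_neq_0_compat; auto]. }
  rewrite !INR_IZR_INZ, <- (mult_IZR _ 2), <- (mult_IZR 2), <- plus_IZR, <- mult_IZR in Hnk.
  apply eq_IZR in Hnk. lia.
Qed.

(* It vanishes when p divides n, so S may be taken over all residues mod pq. *)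
Definition cot_series (p n : nat) : R :=
  -(2 / INR p) * rsum (p - 1) (fun i => INR i.+1 * sin (INR i.+1 * (2 * PI * INR n / INR p))).

Lemma cot_series_cot p n :
  (0 < p)%nat -> (n mod p <> 0)%nat -> cot_series p n = cot (PI * INR n / INR p).
Proof.
  intros Hp Hn.
  assert (Hs : sin (PI * INR n / INR p) <> 0).
  { rewrite INR_IZR_INZ. apply sin_PI_frac_neq0; auto.
    rewrite <- Nat2Z.inj_mod. lia. }
  set (x := PI * INR n / INR p) in *.
  assert (Hp' : INR p <> 0) by (apply not_0_INR; lia).
  assert (Hm : INR (p - 1) = INR p - 1) by (rewrite minus_INR by lia; simpl; ring).
  assert (Hlin := sum_lin_sin_even_mul x (p - 1)).
  assert (Hcos := sum_cos_odd_mul x (p - 1)).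
  rewrite Hm in Hlin, Hcos.
  replace (2 * (INR p - 1) * x) with (- (2 * x) + 2 * INR n * PI) in Hcos
    by (unfold x; field; auto).
  replace ((2 * (INR p - 1) + 1) * x) with (- x + 2 * INR n * PI) in Hlin
    by (unfold x; field; auto).
  rewrite sin_period, sin_neg, sin_2a in Hcos. rewrite cos_period, cos_neg in Hlin.
  unfold cot_series, cot.
  replace (rsum (p - 1) (fun i => INR i.+1 * sin (INR i.+1 * (2 * PI * INR n / INR p))))
    with (rsum (p - 1).+1 (fun j => INR j * sin (2 * INR j * x))).
  2: { rewrite rsum_succ_l. simpl INR at 1. rewrite Rmult_0_l, Rplus_0_l.
       apply rsum_ext. intros i _. unfold x. f_equal. f_equal. field. auto. }
  set (T := rsum (p - 1).+1 (fun j => INR j * sin (2 * INR j * x))) in *.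
  set (C := rsum (p - 1) (fun l => cos ((2 * INR l + 1) * x))) in *.
  apply Rmult_eq_reg_l with (4 * sin x * sin x); [| intro H0; apply Hs; nra].
  replace (4 * sin x * sin x * (- (2 / INR p) * T))
    with (- (4 / INR p) * sin x * (2 * sin x * T)) by (field; auto).
  rewrite Hlin.
  replace (- (4 / INR p) * sin x * (C - (INR p - 1) * cos x))
    with (- (2 / INR p) * (2 * sin x * C) + (4 / INR p) * (INR p - 1) * sin x * cos x)
    by (field; auto).
  rewrite Hcos. field. auto.
Qed.

Lemma cot_series_divisible p n : (0 < p)%nat -> (n mod p = 0)%nat -> cot_series p n = 0.
Proof.
  intros Hp Hn. apply Nat.Div0.mod_divides in Hn as [t Ht].
  assert (Hp' : INR p <> 0) by (apply not_0_INR; lia).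
  unfold cot_series. rewrite (rsum_ext _ _ (fun _ => 0)), rsum_const; [ring|].
  intros i _. rewrite sin_eq_0_1; [ring|]. exists (2 * Z.of_nat (i.+1 * t))%Z.
  rewrite mult_IZR, <- INR_IZR_INZ, Ht, !mult_INR. simpl (IZR 2). field. auto.
Qed.

Definition sec2_weight (N l : nat) : R := (-1) ^ l * (INR N - 2 * INR l).

Definition sec2_series (N n : nat) : R :=
  rsum N (fun l => sec2_weight N l * cos (INR l * (2 * PI * INR n / INR N))).

Lemma cos_plus_INR_PI y l : cos (y + INR l * PI) = (-1) ^ l * cos y.
Proof.
  induction l as [|l IH].
  - simpl. replace (y + 0 * PI) with y by ring. ring.
  - rewrite S_INR. replace (y + (INR l + 1) * PI) with ((y + INR l * PI) + PI) by ring.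
    rewrite neg_cos, IH. simpl. ring.
Qed.

Lemma sec2_series_sec2 N n :
  Nat.Odd N -> sec2_series N n = / (cos (PI * INR n / INR N)) ^ 2.
Proof.
  intros HO. pose proof (cos_PI_frac_odd_neq0 N n HO) as Hc0. destruct HO as [t Ht].
  assert (HN : INR N <> 0) by (apply not_0_INR; lia).
  set (x := PI * INR n / INR N) in *.
  (* With z = x + PI / 2 the signs disappear: (-1)^l cos (2 l x) = cos (2 l z). *)
  set (z := x + PI / 2).
  assert (Hsz : sin z = cos x) by (unfold z; rewrite sin_plus, sin_PI2, cos_PI2; ring).
  assert (Hm : INR (N - 1) = INR N - 1) by (rewrite minus_INR by lia; simpl; ring).
  replace (sec2_series N n)
    with (rsum (N - 1).+1 (fun l => (INR N - 2 * INR l) * cos (2 * INR l * z))).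
  2: { replace (N - 1).+1 with N by lia. unfold sec2_series, sec2_weight.
       apply rsum_ext. intros l _.
       replace (2 * INR l * z) with (INR l * (2 * PI * INR n / INR N) + INR l * PI)
         by (unfold z, x; field; auto).
       rewrite cos_plus_INR_PI. ring. }
  assert (H2Nz : 2 * INR N * z = PI + 2 * INR (n + t) * PI).
  { assert (HNt : INR N = 2 * INR t + 1) by (rewrite Ht, plus_INR, mult_INR; simpl; ring).
    replace (2 * INR N * z) with (2 * INR n * PI + INR N * PI) by (unfold z, x; field; auto).
    rewrite HNt, plus_INR. ring. }
  assert (Hlin := sum_lin_cos_even_mul (INR N) z (N - 1)).
  assert (Hodd := sum_sin_odd_mul z (N - 1)).
  rewrite Hm in Hlin, Hodd.
  replace ((2 * (INR N - 1) + 1) * z) with ((PI - z) + 2 * INR (n + t) * PI) in Hlin by lra.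
  replace (2 * (INR N - 1) * z) with ((PI - 2 * z) + 2 * INR (n + t) * PI) in Hodd by lra.
  rewrite sin_period, sin_minus, sin_PI, cos_PI in Hlin.
  rewrite cos_period, cos_minus, sin_PI, cos_PI, cos_2a_sin in Hodd.
  rewrite <- Hsz in Hc0 |- *.
  set (T := rsum (N - 1).+1 (fun l => (INR N - 2 * INR l) * cos (2 * INR l * z))) in *.
  set (U := rsum (N - 1) (fun l => sin ((2 * INR l + 1) * z))) in *.
  apply Rmult_eq_reg_l with (4 * sin z ^ 2); [| intro H0; apply Hc0; nra].
  replace (4 * sin z ^ 2 * T) with (2 * sin z * (2 * sin z * T)) by ring.
  rewrite Hlin.
  replace (2 * sin z * (INR N * sin z + (INR N - 2 * (INR N - 1)) * (0 * cos z - -1 * sin z)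
             + 2 * U))
    with (4 * sin z * sin z + 2 * (2 * sin z * U)) by ring.
  rewrite Hodd. field. intro H0. apply Hc0. nra.
Qed.

(** * Orthogonality *)

Lemma cos_2PI_mul_Z (k : Z) : cos (2 * (IZR k * PI)) = 1.
Proof. rewrite cos_2a_sin, sin_eq_0_1 by (exists k; auto). ring. Qed.

Lemma sin_2PI_mul_Z (k : Z) : sin (2 * (IZR k * PI)) = 0.
Proof. rewrite sin_2a, sin_eq_0_1 by (exists k; auto). ring. Qed.

Lemma sum_cos_roots_unity N (M : Z) : (0 < N)%nat ->
  rsum N (fun n => cos (IZR M * (2 * PI * INR n / INR N))) =
  if Z.eqb (M mod Z.of_nat N) 0 then INR N else 0.
Proof.
  intros HN. assert (HN' : INR N <> 0) by (apply not_0_INR; lia).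
  destruct (Z.eqb_spec (M mod Z.of_nat N) 0) as [H0|H0].
  - apply Z.mod_divide in H0 as [c ->]; [|lia].
    rewrite (rsum_ext _ _ (fun _ => 1)), rsum_const; [ring|].
    intros n _. rewrite <- (cos_2PI_mul_Z (c * Z.of_nat n)). f_equal.
    rewrite !mult_IZR, <- !INR_IZR_INZ. field. auto.
  - set (th := PI * IZR M / INR N).
    assert (Hs : sin th <> 0) by (apply sin_PI_frac_neq0; auto).
    pose proof (sum_cos_even_mul th N) as Hsum.
    replace ((2 * INR N - 1) * th) with (2 * (IZR M * PI) - th) in Hsum
      by (unfold th; field; auto).
    rewrite sin_minus, sin_2PI_mul_Z, cos_2PI_mul_Z in Hsum.
    rewrite (rsum_ext _ _ (fun l => cos (2 * INR l * th))).
    2: { intros n _. f_equal. unfold th. field. auto. }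
    apply Rmult_eq_reg_l with (2 * sin th); [| intro; apply Hs; lra].
    rewrite Hsum. ring.
Qed.

Definition sec2_moment (N : nat) (d : Z) : R :=
  rsum N (fun n => cos (IZR d * (2 * PI * INR n / INR N)) * sec2_series N n).

Lemma sec2_moment_opp N d : sec2_moment N (- d) = sec2_moment N d.
Proof.
  unfold sec2_moment. apply rsum_ext. intros n _.
  rewrite opp_IZR, Ropp_mult_distr_l_reverse, cos_neg. reflexivity.
Qed.

Lemma sec2_moment_indicators N (d : Z) : (0 < N)%nat ->
  sec2_moment N d =
  / 2 * rsum N (fun l => sec2_weight N l *
                  (if Z.eqb ((d + Z.of_nat l) mod Z.of_nat N) 0 then INR N else 0))
  + / 2 * rsum N (fun l => sec2_weight N l *
                  (if Z.eqb ((d - Z.of_nat l) mod Z.of_nat N) 0 then INR N else 0)).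
Proof.
  intros HN. unfold sec2_moment, sec2_series.
  set (al := fun n => 2 * PI * INR n / INR N).
  rewrite (rsum_ext _ _ (fun n => rsum N (fun l => sec2_weight N l * / 2 *
     (cos (IZR (d + Z.of_nat l) * al n) + cos (IZR (d - Z.of_nat l) * al n))))).
  2: { intros n _. rewrite <- rsum_mull. apply rsum_ext. intros l _.
       rewrite plus_IZR, minus_IZR, <- INR_IZR_INZ, Rmult_plus_distr_r, Rmult_minus_distr_r.
       rewrite cos_plus, cos_minus. unfold al. field. }
  rewrite rsum_comm, <- !rsum_mull, <- rsum_add. apply rsum_ext. intros l _.
  rewrite rsum_mull, rsum_add. unfold al. rewrite !sum_cos_roots_unity by auto. ring.
Qed.

Lemma sub_mod_eq0_eq (e l N : nat) : (e < N)%nat -> (l < N)%nat ->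
  ((Z.of_nat e - Z.of_nat l) mod Z.of_nat N = 0)%Z -> l = e.
Proof.
  intros He Hl H. apply Z.mod_divide in H as [c Hc]; [|lia].
  assert (c = 0)%Z by (destruct (Z.lt_trichotomy c 0) as [|[|]]; auto; nia). subst. lia.
Qed.

Lemma add_mod_eq0_eq (e l N : nat) : (e < N)%nat -> (l < N)%nat ->
  ((Z.of_nat e + Z.of_nat l) mod Z.of_nat N = 0)%Z -> (e + l = 0 \/ e + l = N)%nat.
Proof.
  intros He Hl H. apply Z.mod_divide in H as [c Hc]; [|lia].
  assert (c = 0 \/ c = 1)%Z as [|] by (destruct (Z.lt_trichotomy c 1) as [|[|]]; nia);
    subst; lia.
Qed.

Lemma sec2_moment_nat N e : Nat.Odd N -> (e < N)%nat ->
  sec2_moment N (Z.of_nat e) = INR N * (-1) ^ e * (INR N - 2 * INR e).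
Proof.
  intros HO He. rewrite sec2_moment_indicators by (destruct HO; lia).
  assert (Hmod0 : forall z, z = 0%Z -> Z.eqb (z mod Z.of_nat N) 0 = true).
  { intros z ->. apply Z.eqb_eq, Z.mod_0_l. lia. }
  rewrite (rsum_indicator N (sec2_weight N)
             (fun l => Z.eqb ((Z.of_nat e - Z.of_nat l) mod Z.of_nat N) 0) (INR N) e); auto.
  2: { apply Hmod0. lia. }
  2: { intros l Hl Hb. apply Z.eqb_eq in Hb. eapply sub_mod_eq0_eq; eauto. }
  destruct (Nat.eq_dec e 0) as [->|Hne].
  - rewrite (rsum_indicator N (sec2_weight N) _ (INR N) 0); auto.
    2: { intros l Hl Hb. apply Z.eqb_eq in Hb. apply add_mod_eq0_eq in Hb; lia. }
    unfold sec2_weight. simpl. field.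
  - rewrite (rsum_indicator N (sec2_weight N) _ (INR N) (N - e)); try lia.
    2: { apply Z.eqb_eq. rewrite Nat2Z.inj_sub by lia.
         replace (Z.of_nat e + (Z.of_nat N - Z.of_nat e))%Z with (Z.of_nat N) by lia.
         apply Z.mod_same. lia. }
    2: { intros l Hl Hb. apply Z.eqb_eq in Hb. apply add_mod_eq0_eq in Hb; lia. }
    assert (Hsign : (-1) ^ (N - e) = - (-1) ^ e).
    { pose proof (pow_neg1_odd N HO) as H1. replace N with (N - e + e)%nat in H1 at 1 by lia.
      rewrite pow_add in H1. pose proof (pow_neg1_sq e). nra. }
    unfold sec2_weight. rewrite minus_INR, Hsign by lia. field.
Qed.

(** * Reduction to a lattice sum *)

Lemma rsum_reflect_antisym q (c g : nat -> R) :
  (forall k, (k <= q)%nat -> c (q - k)%nat = - c k) ->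
  rsum (q - 1) (fun i => c i.+1 * g i.+1) = - rsum (q - 1) (fun i => c i.+1 * g (q - i.+1)%nat).
Proof.
  intros Hc. rewrite (rsum_reflect q (fun k => c k * g k)).
  rewrite <- (Rmult_1_l (rsum _ (fun i => c i.+1 * g (q - i.+1)%nat))), Ropp_mult_distr_l.
  rewrite <- rsum_mull. apply rsum_ext. intros i Hi.
  rewrite Hc by lia. replace (q - (q - i.+1))%nat with i.+1 by lia. ring.
Qed.

Lemma rsum_mul_index_antisym q (f : nat -> R) :
  (forall k, (k <= q)%nat -> f (q - k)%nat = - f k) ->
  rsum (q - 1) (fun i => INR i.+1 * f i.+1) =
  / 2 * rsum (q - 1) (fun i => (2 * INR i.+1 - INR q) * f i.+1).
Proof.
  intros Hf.
  assert (Hrefl : rsum (q - 1) (fun i => INR i.+1 * f i.+1) =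
                  - rsum (q - 1) (fun i => (INR q - INR i.+1) * f i.+1)).
  { rewrite (rsum_reflect q (fun k => INR k * f k)).
    rewrite <- (Rmult_1_l (rsum _ (fun i => (INR q - INR i.+1) * f i.+1))), Ropp_mult_distr_l.
    rewrite <- rsum_mull. apply rsum_ext. intros i Hi. rewrite minus_INR, Hf by lia. ring. }
  replace (rsum (q - 1) (fun i => (2 * INR i.+1 - INR q) * f i.+1))
    with (rsum (q - 1) (fun i => INR i.+1 * f i.+1)
          - rsum (q - 1) (fun i => (INR q - INR i.+1) * f i.+1)).
  - rewrite Hrefl at 1. lra.
  - rewrite <- rsum_sub. apply rsum_ext. intros. ring.
Qed.

Lemma cot_series_centered q n : (0 < q)%nat ->
  cot_series q n = -(1 / INR q) *
    rsum (q - 1) (fun k => (2 * INR k.+1 - INR q) * sin (INR k.+1 * (2 * PI * INR n / INR q))).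
Proof.
  intros Hq. assert (Hq' : INR q <> 0) by (apply not_0_INR; lia).
  unfold cot_series.
  rewrite (rsum_mul_index_antisym q (fun k => sin (INR k * (2 * PI * INR n / INR q)))).
  - field. auto.
  - intros k Hk. rewrite minus_INR by auto.
    replace ((INR q - INR k) * (2 * PI * INR n / INR q))
      with (- (INR k * (2 * PI * INR n / INR q)) + 2 * INR n * PI) by (field; auto).
    rewrite sin_period, sin_neg. reflexivity.
Qed.

Lemma sin_mul_centered_sin_sum q A beta (m : nat) : INR q * beta = 2 * INR m * PI ->
  sin A * rsum (q - 1) (fun k => (2 * INR k.+1 - INR q) * sin (INR k.+1 * beta)) =
  rsum (q - 1) (fun k => (2 * INR k.+1 - INR q) * cos (A - INR k.+1 * beta)).
Proof.
  intros Hbeta. set (c := fun k => 2 * INR k - INR q).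
  assert (Hc : forall k, (k <= q)%nat -> c (q - k)%nat = - c k)
    by (intros k Hk; unfold c; rewrite minus_INR by auto; ring).
  assert (Hplus : rsum (q - 1) (fun k => c k.+1 * cos (A + INR k.+1 * beta)) =
                  - rsum (q - 1) (fun k => c k.+1 * cos (A - INR k.+1 * beta))).
  { rewrite (rsum_reflect_antisym q c (fun k => cos (A + INR k * beta))) by auto.
    f_equal. apply rsum_ext. intros k Hk. rewrite minus_INR by lia.
    replace (A + (INR q - INR k.+1) * beta) with (A - INR k.+1 * beta + 2 * INR m * PI) by lra.
    rewrite cos_period. reflexivity. }
  rewrite <- rsum_mull.
  replace (rsum (q - 1) (fun k => sin A * ((2 * INR k.+1 - INR q) * sin (INR k.+1 * beta))))
    with (/ 2 * rsum (q - 1) (fun k => c k.+1 * cos (A - INR k.+1 * beta))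
          - / 2 * rsum (q - 1) (fun k => c k.+1 * cos (A + INR k.+1 * beta))).
  - rewrite Hplus. unfold c. cbv beta. field.
  - rewrite <- !rsum_mull, <- rsum_sub. apply rsum_ext. intros k _.
    unfold c. rewrite cos_plus, cos_minus. field.
Qed.

Lemma cot_series_mul p q n : (0 < p)%nat -> (0 < q)%nat ->
  cot_series p n * cot_series q n = 2 / (INR p * INR q) *
    rsum (p - 1) (fun i => INR i.+1 * rsum (q - 1) (fun k => (2 * INR k.+1 - INR q) *
      cos ((INR i.+1 * INR q - INR k.+1 * INR p) * (2 * PI * INR n / INR (p * q))))).
Proof.
  intros Hp Hq.
  assert (Hp' : INR p <> 0) by (apply not_0_INR; lia).
  assert (Hq' : INR q <> 0) by (apply not_0_INR; lia).
  rewrite (cot_series_centered q n Hq). unfold cot_series.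
  set (al := 2 * PI * INR n / INR (p * q)).
  replace (2 * PI * INR n / INR p) with (INR q * al) by (unfold al; rewrite mult_INR; field; auto).
  replace (2 * PI * INR n / INR q) with (INR p * al) by (unfold al; rewrite mult_INR; field; auto).
  set (Q := rsum (q - 1) (fun k => (2 * INR k.+1 - INR q) * sin (INR k.+1 * (INR p * al)))).
  transitivity (2 / (INR p * INR q) *
    (rsum (p - 1) (fun i => INR i.+1 * sin (INR i.+1 * (INR q * al))) * Q)); [field; auto|].
  rewrite <- rsum_mulr. f_equal. apply rsum_ext. intros i _.
  rewrite Rmult_assoc. f_equal. unfold Q.
  rewrite (sin_mul_centered_sin_sum q _ (INR p * al) n).
  - apply rsum_ext. intros k _. f_equal. f_equal. ring.
  - unfold al. rewrite mult_INR. field. auto.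
Qed.

Lemma fold_right_filter_seq (f : nat -> R) (P : nat -> bool) a n :
  fold_right Rplus 0 (map f (filter P (seq a n))) =
  rsum n (fun i => if P (a + i)%nat then f (a + i)%nat else 0).
Proof.
  revert a. induction n as [|n IH]; intros a; auto.
  rewrite rsum_succ_l. simpl seq. simpl filter. rewrite Nat.add_0_r.
  rewrite (rsum_ext n _ (fun i => if P (a.+1 + i)%nat then f (a.+1 + i)%nat else 0)).
  2: { intros. rewrite Nat.add_succ_r. auto. }
  rewrite <- IH. destruct (P a); simpl; lra.
Qed.

Lemma S_cot_series p q : Nat.Odd p -> Nat.Odd q ->
  S p q = rsum (p * q) (fun n => cot_series p n * cot_series q n * sec2_series (p * q) n).
Proof.
  intros Hp Hq.
  assert (H0p : (0 < p)%nat) by (destruct Hp; lia).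
  assert (H0q : (0 < q)%nat) by (destruct Hq; lia).
  assert (HO : Nat.Odd (p * q)) by (apply Nat.Odd_mul; auto).
  unfold S. rewrite fold_right_filter_seq.
  rewrite <- (Nat.succ_pred_pos (p * q)) at 2 by nia.
  rewrite rsum_succ_l, (cot_series_divisible p 0), Rmult_0_l, Rmult_0_l, Rplus_0_l by
    (try apply Nat.Div0.mod_0_l; lia).
  rewrite <- Nat.sub_1_r. apply rsum_ext. intros i Hi. simpl (1 + i)%nat.
  destruct (Nat.eqb_spec (i.+1 mod p) 0) as [Ep|Ep];
    [rewrite (cot_series_divisible p) by (auto; lia); simpl; ring|].
  destruct (Nat.eqb_spec (i.+1 mod q) 0) as [Eq|Eq];
    [rewrite (cot_series_divisible q) by (auto; lia); simpl; ring|].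
  simpl. unfold term. rewrite !cot_series_cot, sec2_series_sec2 by (auto; lia).
  reflexivity.
Qed.

Lemma pow_neg1_lattice p q j k e : Nat.Odd p -> Nat.Odd q -> (e + k * p = j * q)%nat ->
  (-1) ^ e = (-1) ^ (j + k).
Proof.
  intros Hp Hq H. assert (H1 : (-1) ^ e * (-1) ^ k = (-1) ^ j).
  { rewrite <- (pow_neg1_mul_odd p k Hp), <- (pow_neg1_mul_odd q j Hq), <- pow_add, H. auto. }
  rewrite pow_add, <- H1, Rmult_assoc, pow_neg1_sq. ring.
Qed.

Lemma sec2_moment_lattice p q j k : Nat.Odd p -> Nat.Odd q -> (j < p)%nat -> (k < q)%nat ->
  sec2_moment (p * q) (Z.of_nat (j * q) - Z.of_nat (k * p)) =
  INR (p * q) * (-1) ^ (j + k) * (INR (p * q) - 2 * Rabs (INR j * INR q - INR k * INR p)).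
Proof.
  intros Hp Hq Hj Hk. assert (HO : Nat.Odd (p * q)) by (apply Nat.Odd_mul; auto).
  destruct (le_lt_dec (k * p) (j * q)) as [Hle|Hlt].
  - rewrite <- Nat2Z.inj_sub, sec2_moment_nat by (auto; nia).
    rewrite (pow_neg1_lattice p q j k (j * q - k * p)) by (auto; lia).
    rewrite minus_INR by auto. apply le_INR in Hle. rewrite !mult_INR in *.
    rewrite Rabs_right by lra. ring.
  - replace (Z.of_nat (j * q) - Z.of_nat (k * p))%Z with (- Z.of_nat (k * p - j * q))%Z by lia.
    rewrite sec2_moment_opp, sec2_moment_nat by (auto; nia).
    rewrite (pow_neg1_lattice q p k j (k * p - j * q)), Nat.add_comm by (auto; lia).
    rewrite minus_INR by lia. apply lt_INR in Hlt. rewrite !mult_INR in *.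
    rewrite Rabs_left by lra. ring.
Qed.

Definition lattice_row (p q j : nat) : R :=
  rsum (q - 1) (fun k => INR j * (2 * INR k.+1 - INR q) * (-1) ^ (j + k.+1) *
    (INR (p * q) - 2 * Rabs (INR j * INR q - INR k.+1 * INR p))).

Definition lattice_sum (p q : nat) : R := rsum (p - 1) (fun i => lattice_row p q i.+1).

Lemma S_lattice_sum p q : Nat.Odd p -> Nat.Odd q -> S p q = 2 * lattice_sum p q.
Proof.
  intros Hp Hq.
  assert (H0p : (0 < p)%nat) by (destruct Hp; lia).
  assert (H0q : (0 < q)%nat) by (destruct Hq; lia).
  assert (Hp' : INR p <> 0) by (apply not_0_INR; lia).
  assert (Hq' : INR q <> 0) by (apply not_0_INR; lia).
  rewrite S_cot_series by auto.
  transitivity (2 / (INR p * INR q) * rsum (p - 1) (fun i => rsum (q - 1) (fun k =>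
     INR i.+1 * (2 * INR k.+1 - INR q) *
     sec2_moment (p * q) (Z.of_nat (i.+1 * q) - Z.of_nat (k.+1 * p))))).
  - transitivity (rsum (p * q) (fun n => 2 / (INR p * INR q) *
      rsum (p - 1) (fun i => rsum (q - 1) (fun k => INR i.+1 * (2 * INR k.+1 - INR q) *
        (cos ((INR i.+1 * INR q - INR k.+1 * INR p) * (2 * PI * INR n / INR (p * q)))
         * sec2_series (p * q) n))))).
    + apply rsum_ext. intros n _. rewrite cot_series_mul by lia.
      rewrite Rmult_assoc. f_equal. rewrite <- rsum_mulr. apply rsum_ext. intros i _.
      rewrite Rmult_assoc, <- rsum_mulr, <- rsum_mull. apply rsum_ext. intros k _. ring.
    + rewrite rsum_mull. f_equal. rewrite rsum_comm. apply rsum_ext. intros i _.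
      rewrite rsum_comm. apply rsum_ext. intros k _. rewrite rsum_mull. f_equal.
      apply rsum_ext. intros n _. rewrite minus_IZR, <- !INR_IZR_INZ, !mult_INR. reflexivity.
  - unfold lattice_sum, lattice_row. rewrite <- !rsum_mull. apply rsum_ext. intros i Hi.
    rewrite <- !rsum_mull. apply rsum_ext. intros k Hk.
    rewrite sec2_moment_lattice, mult_INR by (auto; lia). field. auto.
Qed.

(** * Evaluation of the lattice sum *)

Lemma rsum_alt_telescope (f P : R -> R) a n :
  (forall x, P x + P (x - 1) = f x) ->
  rsum n (fun i => (-1) ^ (a + i).+1 * f (INR (a + i).+1)) =
  (-1) ^ (a + n) * P (INR (a + n)) - (-1) ^ a * P (INR a).
Proof.
  intros HP. induction n as [|n IH].
  - simpl. rewrite Nat.add_0_r. ring.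
  - cbn [rsum]. rewrite IH, <- HP, Nat.add_succ_r, S_INR.
    replace (INR (a + n) + 1 - 1) with (INR (a + n)) by ring. simpl pow. ring.
Qed.

Definition cubic_alt_antidiff (f3 f2 f1 f0 x : R) : R :=
  let a := f3 / 2 in
  let b := (f2 + 3 * a) / 2 in
  let c := (f1 - 3 * a + 2 * b) / 2 in
  let d := (f0 + a - b + c) / 2 in
  a * x ^ 3 + b * x ^ 2 + c * x + d.

Lemma cubic_alt_antidiff_spec f3 f2 f1 f0 x :
  cubic_alt_antidiff f3 f2 f1 f0 x + cubic_alt_antidiff f3 f2 f1 f0 (x - 1) =
  f3 * x ^ 3 + f2 * x ^ 2 + f1 * x + f0.
Proof. unfold cubic_alt_antidiff. field. Qed.

(* Where s is the sign of j q - k p, the k-th summand of [lattice_row] is (-1)^(j+k) j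
   times (2k - q)(pq - 2 s (j q - k p)); this is the alternating antidifference of the latter. *)
Definition row_antidiff (p q j : nat) (s x : R) : R :=
  cubic_alt_antidiff 0 (4 * s * INR p)
    (2 * (INR p * INR q - 2 * s * INR j * INR q) - 2 * s * INR p * INR q)
    (- INR q * (INR p * INR q - 2 * s * INR j * INR q)) x.

Lemma lattice_row_split p q j K : (K <= q - 1)%nat -> (K * p <= j * q < K.+1 * p)%nat ->
  lattice_row p q j = (-1) ^ j * INR j *
    ((-1) ^ K * (row_antidiff p q j 1 (INR K) - row_antidiff p q j (-1) (INR K))
     + (-1) ^ (q - 1) * row_antidiff p q j (-1) (INR (q - 1)) - row_antidiff p q j 1 0).
Proof.
  intros HK [Hlo Hhi].
  set (piece := fun s x => (-1) ^ j * INR j *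
         ((2 * x - INR q) * (INR p * INR q - 2 * s * (INR j * INR q - x * INR p)))).
  assert (Hanti : forall s x, (-1) ^ j * INR j * row_antidiff p q j s x
                  + (-1) ^ j * INR j * row_antidiff p q j s (x - 1) = piece s x).
  { intros s x. unfold row_antidiff, piece.
    rewrite <- Rmult_plus_distr_l, cubic_alt_antidiff_spec. cbv beta. ring. }
  unfold lattice_row. replace (q - 1)%nat with (K + (q - 1 - K))%nat at 1 by lia.
  rewrite rsum_split.
  rewrite (rsum_ext K _ (fun i => (-1) ^ (0 + i).+1 * piece 1 (INR (0 + i).+1))).
  2: { intros i Hi. unfold piece. change (0 + i)%nat with i.
       rewrite mult_INR, Rabs_right, pow_add; [ring|].
       assert (Hk : (i.+1 * p <= j * q)%nat) by nia.
       apply le_INR in Hk. rewrite !mult_INR in Hk. lra. }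
  rewrite (rsum_ext (q - 1 - K) _ (fun i => (-1) ^ (K + i).+1 * piece (-1) (INR (K + i).+1))).
  2: { intros i Hi. unfold piece. rewrite mult_INR, Rabs_left, pow_add; [ring|].
       assert (Hk : (j * q < (K + i).+1 * p)%nat) by nia.
       apply lt_INR in Hk. rewrite !mult_INR in Hk. lra. }
  rewrite (rsum_alt_telescope (piece 1) _ 0 K (Hanti 1)).
  rewrite (rsum_alt_telescope (piece (-1)) _ K (q - 1 - K) (Hanti (-1))).
  replace (K + (q - 1 - K))%nat with (q - 1)%nat by lia.
  simpl (INR 0). simpl (0 + K)%nat. simpl ((-1) ^ 0). ring.
Qed.

Lemma lattice_row_value p q m j : Nat.Even m -> (1 <= m)%nat ->
  (q = m * p + 1 \/ q + 1 = m * p)%nat -> (1 <= j < p)%nat ->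
  lattice_row p q j = (-1) ^ j * (4 * INR m * INR j ^ 2 * (INR p - INR j)).
Proof.
  intros Hm Hm1 Hq Hj.
  assert (Hjm : Nat.Even (j * m)) by (apply Nat.Even_mul_r; auto).
  destruct Hq as [Hq|Hq].
  - assert (HQ : INR q = INR m * INR p + 1) by (rewrite Hq, plus_INR, mult_INR; simpl; ring).
    rewrite (lattice_row_split p q j (j * m)) by nia.
    replace (q - 1)%nat with (m * p)%nat by lia.
    rewrite (pow_neg1_even (j * m)), (pow_neg1_even (m * p)) by (auto; apply Nat.Even_mul_l; auto).
    unfold row_antidiff, cubic_alt_antidiff. rewrite !mult_INR, HQ. field.
  - assert (Hm2 : (2 <= m)%nat) by (destruct Hm as [t Ht]; lia).
    assert (HQ : INR q = INR m * INR p - 1).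
    { apply (f_equal INR) in Hq. rewrite plus_INR, mult_INR in Hq. simpl in Hq. lra. }
    rewrite (lattice_row_split p q j (j * m - 1)) by nia.
    replace (q - 1)%nat with (m * p - 2)%nat by lia.
    rewrite (pow_neg1_odd (j * m - 1)), (pow_neg1_even (m * p - 2)).
    2: { destruct Hm as [t Ht]. exists (t * p - 1)%nat. nia. }
    2: { destruct Hjm as [t Ht]. exists (t - 1)%nat. nia. }
    unfold row_antidiff, cubic_alt_antidiff. rewrite !minus_INR, !mult_INR, HQ by nia.
    simpl (INR 1). simpl (INR 2). field.
Qed.

Lemma rsum_alt_sq_compl p m : Nat.Odd p ->
  rsum (p - 1) (fun i => (-1) ^ i.+1 * (4 * INR m * INR i.+1 ^ 2 * (INR p - INR i.+1))) =
  INR m * (INR p ^ 2 - 1).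
Proof.
  intros Hp.
  etransitivity.
  { apply (rsum_alt_telescope (fun x => 4 * INR m * x ^ 2 * (INR p - x))
             (cubic_alt_antidiff (- 4 * INR m) (4 * INR m * INR p) 0 0) 0 (p - 1)).
    intros x. rewrite cubic_alt_antidiff_spec. ring. }
  rewrite Nat.add_0_l, pow_neg1_even by (destruct Hp as [t Ht]; exists t; lia).
  rewrite minus_INR by (destruct Hp; lia). unfold cubic_alt_antidiff. simpl. field.
Qed.

Lemma lattice_sum_value p q m : Nat.Odd p -> Nat.Even m -> (1 <= m)%nat ->
  (q = m * p + 1 \/ q + 1 = m * p)%nat ->
  lattice_sum p q = INR m * (INR p ^ 2 - 1).
Proof.
  intros Hp Hm Hm1 Hq. unfold lattice_sum. rewrite <- (rsum_alt_sq_compl p m Hp).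
  apply rsum_ext. intros i Hi. apply lattice_row_value; auto. lia.
Qed.

Lemma even_of_odd_near_multiple p q m : Nat.Odd p -> Nat.Odd q ->
  (q = m * p + 1 \/ q + 1 = m * p)%nat -> Nat.Even m.
Proof.
  intros Hp [c Hc] Hqm. destruct (Nat.Even_or_Odd m) as [He|Ho]; auto.
  destruct (Nat.Odd_mul _ _ Ho Hp) as [d Hd]. lia.
Qed.

Theorem mainTheorem14 (p q : nat) :
  (3 <= p)%nat -> (3 <= q)%nat -> Nat.Odd p -> Nat.Odd q -> Nat.gcd p q = 1%nat ->
  ((q mod p = 1%nat)%nat ->
     S p q = 2 / INR p * (INR p ^ 2 - 1) * (INR q - 1)) /\
  ((q mod p = p - 1)%nat ->
     S p q = 2 / INR p * (INR p ^ 2 - 1) * (INR q + 1)).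
Proof.
  (* Coprimality already follows from q = +-1 mod p. *)
  intros Hp Hq Hpo Hqo _.
  assert (HP : INR p <> 0) by (apply not_0_INR; lia).
  pose proof (Nat.div_mod_eq q p) as Hdiv.
  rewrite S_lattice_sum by auto.
  split; intros Hmod.
  - assert (Hqm : (q = q / p * p + 1)%nat) by lia.
    assert (Hm : Nat.Even (q / p)) by (apply (even_of_odd_near_multiple p q); auto).
    rewrite (lattice_sum_value p q (q / p)) by (auto; destruct (q / p)%nat; lia).
    rewrite Hqm at 2. rewrite plus_INR, mult_INR. simpl. field. auto.
  - assert (Hqm : (q + 1 = (q / p).+1 * p)%nat) by lia.
    assert (Hm : Nat.Even (q / p).+1) by (apply (even_of_odd_near_multiple p q); auto).
    rewrite (lattice_sum_value p q (q / p).+1) by (auto; lia).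
    apply (f_equal INR) in Hqm. rewrite plus_INR, mult_INR in Hqm.
    change (INR 1) with 1 in Hqm. rewrite Hqm. field. auto.
Qed.
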